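(* Let $T>0$, $0\leq t<T$, $\tau=T-t$, $r\geq 0$, $\sigma>0$, $n\in\mathbb{N}$, and let $S_t>0$ and $M_t>0$ with $S_t\geq M_t$. Put $u=e^{\sigma\sqrt{\tau/n}}$, $d=u^{-1}$, $q=\frac{u-e^{-r\tau/n}}{u-d}$ and $j_0=\frac{\log(S_t/M_t)}{\sigma\sqrt{\tau/n}}$. Let $\Lambda^{j_0}_{j,k,n}$ and $J$ be as in the context, and define the discrete (Cheuk–Vorst) price of the European lookback call with floating strike at time $t$ by \[ C^{fl}_n(t) = S_t \sum_{j\in J} (1-u^{-j})\sum_{k=0}^n \Lambda^{j_0}_{j,k,n}\, q^k(1-q)^{n-k}. \] Then $C^{fl}_n(t) = S_t(V_1-V_2+V_3)$, where, with $k_{\min}=n-\lfloor \frac{n+j_0}{2}\rfloor$ and $k_{\max}=k_{\max}(j)=\lfloor\frac{n-\lfloor j_0\rfloor-1+j}{2}\rfloor$, \begin{align*} V_1&=\sum_{k=k_{\min}}^{n}(1-u^{n-j_0-2k}) \binom{n}{k}q^k(1-q)^{n-k},\\ V_2&=\sum_{k=k_{\min}}^{n-\lfloor j_0\rfloor-1}(1-u^{n-j_0-2k})\binom{n}{k+\lfloor j_0\rfloor+1} q^k(1-q)^{n-k},\\ V_3&=\sum_{j=0}^{n-\lfloor j_0\rfloor-1}(1-u^{-j}) \sum_{k=j}^{k_{\max}}\Big[\binom{n}{k-j}-\binom{n}{k-j-1}\Big] q^k(1-q)^{n-k}. \end{align*}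
   Context: Here $S_t$ is the current price of the underlying and $M_t=\min_{t^*\leq t}S_{t^*}$ its running minimum since emission. Consider the directed graph with initial node $(0,j_0)$ in which, from each node $(m,j_m)$ with $0\leq m<n$, there are exactly two edges: an ''up'' edge to $(m+1,j_m+1)$ and a ''down'' edge to $(m+1,\max(j_m-1,0))$. $\Lambda^{j_0}_{j,k,n}$ is the number of paths from $(0,j_0)$ to $(n,j)$ with exactly $k$ up jumps, and $J$ is the set of levels $j$ such that $(n,j)$ is reachable from $(0,j_0)$. $\lfloor x\rfloor$ is the integer part; binomial coefficients $\binom{n}{i}$ are $0$ for $i<0$ or $i>n$. *)

From HB Require Import structures.
From mathcomp Require Import all_boot all_order all_algebra.
From mathcomp Require Import all_classical all_reals all_analysis.
Set Implicit Arguments. Unset Strict Implicit. Unset Printing Implicit Defensive.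
Import Order.TTheory GRing.Theory Num.Theory.
Local Open Scope ring_scope.

Section Lookback.
Variable R : realType.

Definition lb_step (j : R) (b : bool) : R := if b then j + 1 else Num.max (j - 1) 0.

Definition lb_level (j0 : R) (s : seq bool) : R := foldl lb_step j0 s.

(* Lambda^{j0}_{j,k,n}: number of paths of length n from (0,j0) to (n,j)
   with exactly k up jumps (a path = the sequence of its n edges). *)
Definition Lambda (j0 j : R) (k n : nat) : nat :=
  #|[set p : n.-tuple bool | (lb_level j0 p == j) && (count id p == k)]|.

Definition Jlevels (j0 : R) (n : nat) : seq R :=
  undup [seq lb_level j0 (tval p) | p : n.-tuple bool].

Definition C_fl (S j0 u q : R) (n : nat) : R :=
  S * \sum_(j <- Jlevels j0 n)
        (1 - u `^ (- j)) *
        \sum_(0 <= k < n.+1) (Lambda j0 j k n)%:R * q ^+ k * (1 - q) ^+ (n - k).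

(* Binomial coefficient with integer lower index, 0 for i < 0 or i > n. *)
Definition binZ (n : nat) (i : int) : R :=
  if (i < 0)%R then 0 else ('C(n, absz i))%:R.

Definition zrange (a b : int) : seq int :=
  [seq a + (i%:Z) | i <- iota 0 (if (a <= b)%R then (absz (b - a)).+1 else 0%N)].

Definition V1 (j0 u q : R) (n : nat) : R :=
  let kmin := (n%:Z - Num.floor ((n%:R + j0) / 2))%R in
  \sum_(k <- zrange kmin n%:Z)
     (1 - u `^ (n%:R - j0 - 2 * k%:~R)) * binZ n k * q ^ k * (1 - q) ^ (n%:Z - k).

Definition V2 (j0 u q : R) (n : nat) : R :=
  let kmin := (n%:Z - Num.floor ((n%:R + j0) / 2))%R in
  \sum_(k <- zrange kmin (n%:Z - Num.floor j0 - 1))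
     (1 - u `^ (n%:R - j0 - 2 * k%:~R)) * binZ n (k + Num.floor j0 + 1)
       * q ^ k * (1 - q) ^ (n%:Z - k).

Definition V3 (j0 u q : R) (n : nat) : R :=
  \sum_(j <- zrange 0 (n%:Z - Num.floor j0 - 1))
     (1 - u `^ (- j%:~R)) *
     \sum_(k <- zrange j (Num.floor ((n%:Z - Num.floor j0 - 1 + j)%:~R / 2 : R)))
        (binZ n (k - j) - binZ n (k - j - 1)) * q ^ k * (1 - q) ^ (n%:Z - k).

End Lookback.

(* Backward induction: [C_fl S j0 u q n] is S times [lb_value], the expected payoff
   1 - u^(-L) of the walk started at j0 and reflected at 0, with up moves weighted by q
   and down moves by 1 - q.  Write j0 = m + f with m = floor j0.  The paths that never
   reach the barrier are counted by the reflection principle, C(n,k) - C(n,k+m+1) of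
   them making k up moves: this is [direct], i.e. V1 - V2.  The paths that do reach it
   end at an integer level j, with ballot multiplicities C(n,k-j) - C(n,k-j-1): this is
   [reflected], i.e. V3.  Instead of counting paths, both terms are shown to satisfy the
   one-step recursion of [lb_value] by Pascal's rule; at the barrier, where a down move
   from level f < 1 lands on 0, the identity reflected(-1) = direct(0,0) + reflected(0)
   closes the induction. *)

From HB Require Import structures.
From mathcomp Require Import all_boot all_order all_algebra.
From mathcomp Require Import all_classical all_reals all_analysis.
From mathcomp Require Import zify ring lra.
Set Implicit Arguments. Unset Strict Implicit. Unset Printing Implicit Defensive.
Import Order.TTheory GRing.Theory Num.Theory.
Local Open Scope ring_scope.

Section IntegerBinomial.
Variable R : realType.

Lemma binZ_lt0 n (i : int) : i < 0 -> binZ R n i = 0.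
Proof. by rewrite /binZ => ->. Qed.

Lemma binZ_gtn n (i : int) : n%:Z < i -> binZ R n i = 0.
Proof.
rewrite /binZ => h; case: ifP => // _; rewrite bin_small //.
by case: i h => // k /=; lia.
Qed.

Lemma binZ_sub n (i : int) : binZ R n (n%:Z - i) = binZ R n i.
Proof.
have [i_lt0|i_ge0] := ltrP i 0; first by rewrite [binZ R n i]binZ_lt0 // binZ_gtn //; lia.
have [n_lt_i|i_le_n] := ltrP n%:Z i; first by rewrite [binZ R n i]binZ_gtn // binZ_lt0 //; lia.
case: i i_ge0 i_le_n => // k _ /= k_le_n.
have k_le_n' : (k <= n)%N by lia.
by rewrite subzn // /binZ /= bin_sub.
Qed.

Lemma binZS n (i : int) : binZ R n.+1 i = binZ R n (i - 1) + binZ R n i.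
Proof.
rewrite /binZ; have [i_lt0|] := ltrP i 0; first by rewrite ifT ?add0r //; lia.
case: i => [[|k]|//] _; first by rewrite /= !bin0 add0r.
by rewrite (_ : k.+1%:Z - 1 = k) 1?addrC /= ?binS ?natrD //; lia.
Qed.

End IntegerBinomial.

Lemma sum_tuple_cons (R : nmodType) n (h : n.+1.-tuple bool -> R) :
  \sum_(p : n.+1.-tuple bool) h p =
  \sum_(t : n.-tuple bool) h [tuple of true :: t] +
  \sum_(t : n.-tuple bool) h [tuple of false :: t].
Proof.
rewrite (reindex (fun bt : bool * n.-tuple bool => [tuple of bt.1 :: bt.2])) /=.
  pose g (b : bool) (t : n.-tuple bool) := h [tuple of b :: t].
  by rewrite -(pair_big xpredT xpredT g) big_bool.
exists (fun t : n.+1.-tuple bool => (thead t, [tuple of behead t])) => [[b t] _|t _].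
  by congr pair; apply: val_inj.
by rewrite /= -tuple_eta.
Qed.

Section HomogeneousPolynomial.
Variables (R : comRingType) (x y : R).

Definition hpoly n (c : int -> R) : R := \sum_(k < n.+1) c k%:Z * x ^+ k * y ^+ (n - k).

Lemma mulx_hpoly n (c : int -> R) :
  c (-1) = 0 -> x * hpoly n c = hpoly n.+1 (fun k => c (k - 1)).
Proof.
move=> c_N1; rewrite /hpoly [in RHS]big_ord_recl /= sub0r c_N1 !mul0r add0r mulr_sumr.
apply: eq_bigr => i _; rewrite /bump /= add1n subSS exprS.
by rewrite (_ : i.+1%:Z - 1 = i); [ring | lia].
Qed.

Lemma muly_hpoly n (c : int -> R) : c n.+1 = 0 -> y * hpoly n c = hpoly n.+1 c.
Proof.
move=> c_top; rewrite /hpoly [in RHS]big_ord_recr /= c_top !mul0r addr0 mulr_sumr.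
apply: eq_bigr => i _; rewrite /= subSn ?exprS; [ring | by rewrite -ltnS].
Qed.

Lemma hpolyD n (c1 c2 : int -> R) :
  hpoly n c1 + hpoly n c2 = hpoly n (fun k => c1 k + c2 k).
Proof. by rewrite /hpoly -big_split; apply: eq_bigr => i _; rewrite !mulrDl. Qed.

Lemma eq_hpoly n (c1 c2 : int -> R) : (forall k : nat, (k <= n)%N -> c1 k = c2 k) ->
  hpoly n c1 = hpoly n c2.
Proof. by move=> e; apply: eq_bigr => i _; rewrite e // -ltnS. Qed.

End HomogeneousPolynomial.

Section ReflectedWalk.
Variables (R : realType) (x y : R) (F : R -> R).
Local Notation hpoly := (hpoly x y).

Definition ballot n (k j : int) : R := binZ R n (k - j) - binZ R n (k - j - 1).

Definition direct_coef n (m : int) (f : R) (k : int) : R :=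
  if n%:Z <= 2 * k + m
  then (binZ R n k - binZ R n (k + m + 1)) * F (m%:~R + f + 2 * k%:~R - n%:R)
  else 0.

Definition reflected_coef n (m j : int) (k : int) : R :=
  if 2 * k + m + 1 <= n%:Z + j then ballot n k j else 0.

Definition direct n (m : int) (f : R) : R := hpoly n (direct_coef n m f).

Definition reflected K n (m : int) : R := \sum_(j < K) F j%:R * hpoly n (reflected_coef n m j).

Lemma direct_rec n (m : int) f : 0 <= m ->
  direct n.+1 m f = x * direct n (m + 1) f + y * direct n (m - 1) f.
Proof.
move=> m_ge0; rewrite /direct mulx_hpoly; last first.
  rewrite /direct_coef; case: ifP => // n_le.
  by rewrite binZ_lt0 ?binZ_gtn ?subrr ?mul0r //; lia.
rewrite muly_hpoly; last first.
  rewrite /direct_coef; case: ifP => // n_le.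
  by rewrite binZ_gtn ?binZ_gtn ?subrr ?mul0r //; lia.
rewrite hpolyD; apply: eq_hpoly => k _; rewrite /direct_coef.
have -> : (n%:Z <= 2 * (k%:Z - 1) + (m + 1)) = (n.+1%:Z <= 2 * k%:Z + m) by lia.
have -> : (n%:Z <= 2 * k%:Z + (m - 1)) = (n.+1%:Z <= 2 * k%:Z + m) by lia.
case: ifP => _; last by rewrite addr0.
set L := m%:~R + f + 2 * k%:~R - n.+1%:R.
have -> : (m + 1)%:~R + f + 2 * (k%:Z - 1)%:~R - n%:R = L :> R.
  by rewrite /L !(intrD, intrN) -[n.+1]addn1 natrD; ring.
have -> : (m - 1)%:~R + f + 2 * k%:~R - n%:R = L :> R.
  by rewrite /L !(intrD, intrN) -[n.+1]addn1 natrD; ring.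
rewrite -mulrDl !binZS (_ : k%:Z - 1 + (m + 1) + 1 = k%:Z + m + 1); last by ring.
rewrite (_ : k%:Z + m + 1 - 1 = k%:Z + (m - 1) + 1); last by ring.
by congr (_ * F _); ring.
Qed.

Lemma ballot_lt n (k j : int) : k < j -> ballot n k j = 0.
Proof. by move=> k_lt_j; rewrite /ballot !binZ_lt0 ?subrr //; lia. Qed.

Lemma reflected_rec K n (m : int) : 0 <= m ->
  reflected K n.+1 m = x * reflected K n (m + 1) + y * reflected K n (m - 1).
Proof.
move=> m_ge0; rewrite /reflected !mulr_sumr -big_split; apply: eq_bigr => j _.
rewrite /= mulrCA [y * _]mulrCA -mulrDr; congr (_ * _).
rewrite mulx_hpoly; last by rewrite /reflected_coef; case: ifP => // _; rewrite ballot_lt.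
rewrite muly_hpoly; last first.
  rewrite /reflected_coef; case: ifP => // le_nj; rewrite ballot_lt //; lia.
rewrite hpolyD; apply: eq_hpoly => k _; rewrite /reflected_coef.
have -> : (2 * (k%:Z - 1) + (m + 1) + 1 <= n%:Z + j%:Z) = (2 * k%:Z + m + 1 <= n.+1%:Z + j%:Z).
  by lia.
have -> : (2 * k%:Z + (m - 1) + 1 <= n%:Z + j%:Z) = (2 * k%:Z + m + 1 <= n.+1%:Z + j%:Z).
  by lia.
case: ifP => _; last by rewrite addr0.
by rewrite /ballot !binZS (_ : k%:Z - 1 - j%:Z = k%:Z - j%:Z - 1); [ring | ring].
Qed.

Lemma direct_N1 n f : direct n (-1) f = 0.
Proof.
apply: big1 => k _; rewrite /direct_coef; case: ifP => _; last by rewrite !mul0r.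
by rewrite (_ : k%:Z + -1 + 1 = k) ?subrr ?mul0r //; ring.
Qed.

Lemma reflected_N1 K n : (n < K)%N ->
  reflected K n (-1) = direct n 0 0 + reflected K n 0.
Proof.
move=> n_lt_K.
pose touch (j : nat) k := if 2 * k == n%:Z + j%:Z then ballot n k j else 0.
have -> : reflected K n (-1) = reflected K n 0 + \sum_(j < K) F j%:R * hpoly n (touch j).
  rewrite /reflected -big_split; apply: eq_bigr => j _; rewrite /= -mulrDr hpolyD.
  congr (_ * _); apply: eq_hpoly => k _; rewrite /reflected_coef /touch.
  by do 3 case: ifP => ?; rewrite ?addr0 ?add0r //; exfalso; lia.
rewrite addrC; congr (_ + _); rewrite /direct /hpoly.
under eq_bigr do rewrite mulr_sumr.
rewrite exchange_big /=; apply: eq_bigr => k _; rewrite /direct_coef /touch.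
have [n_le_2k|] := leqP n (2 * k); last first.
  move=> lt_2k_n; rewrite ifF ?mul0r; last by lia.
  by apply: big1 => j _; rewrite ifF ?mul0r ?mulr0 //; lia.
rewrite ifT; last by lia.
have j_lt_K : (2 * k - n < K)%N by have := ltn_ord k; lia.
rewrite (bigD1 (Ordinal j_lt_K)) //= big1 ?addr0 => [|j ne_j]; last first.
  rewrite ifF ?mul0r ?mulr0 //; apply/negbTE; apply: contra ne_j => /eqP e.
  by apply/eqP/val_inj => /=; lia.
rewrite ifT; last by lia.
have -> : (0%:~R + 2 * k%:~R - n%:R : R) = (2 * k - n)%N%:R.
  by rewrite natrB // natrM; ring.
rewrite /ballot.
have -> : k%:Z - (2 * k - n)%N%:Z = n%:Z - k%:Z by lia.
have -> : n%:Z - k%:Z - 1 = n%:Z - (k%:Z + 1) by ring.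
by rewrite !binZ_sub; ring.
Qed.

Fixpoint lb_value n (L : R) : R :=
  if n is n'.+1 then x * lb_value n' (lb_step L true) + y * lb_value n' (lb_step L false)
  else F L.

Lemma lb_value_paths n L : lb_value n L =
  \sum_(p : n.-tuple bool) F (lb_level L p) * x ^+ count id p * y ^+ (n - count id p).
Proof.
elim: n L => [|n IHn] L.
  rewrite (big_pred1 [tuple]) /=; last by move=> t; rewrite [t]tuple0 /= eqxx.
  by rewrite !mulr1.
rewrite /= sum_tuple_cons !IHn !mulr_sumr; congr (_ + _); apply: eq_bigr => t _;
  rewrite /lb_level /=.
  by rewrite add1n subSS exprS; ring.
have count_le : (count id t <= n)%N by rewrite -[leqRHS](size_tuple t) count_size.
by rewrite add0n subSn // exprS; ring.
Qed.

Lemma lb_value_closed n (m : nat) f K : 0 <= f < 1 -> (n < K)%N ->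
  lb_value n (m%:R + f) = direct n m f + reflected K n m.
Proof.
elim: n m f => [|n IHn] m f f01 n_lt_K.
  rewrite /direct /reflected /hpoly big_ord1 /direct_coef /= mulr1 !expr0 mulr1.
  rewrite big1 => [|j _]; last first.
    rewrite big_ord1 /reflected_coef; case: ifP => ?; last by rewrite !mul0r mulr0.
    by rewrite ballot_lt ?mul0r ?mulr0 //; lia.
  rewrite addr0 [binZ _ 0 (_ + _ + 1)]binZ_gtn /binZ //=; last by lia.
  by rewrite subr0 mul1r mulr0 subr0 addr0.
have n_lt_K' : (n < K)%N by lia.
rewrite /= direct_rec // reflected_rec //.
have up : m%:R + f + 1 = m.+1%:R + f by rewrite -addn1 natrD; ring.
case: m => [|m] in up *.
  have -> : Num.max (0%:R + f - 1) 0 = 0%:R + 0 by rewrite max_r //; lra.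
  rewrite up !IHn //; last by lra.
  by rewrite direct_N1 -reflected_N1 //; ring.
have -> : Num.max (m.+1%:R + f - 1) 0 = m%:R + f.
  by rewrite max_l -addn1 natrD; [ring | have : 0 <= m%:R :> R by []; lra].
have -> : m.+1%:Z + 1 = m.+2 by lia.
have -> : m.+1%:Z - 1 = m by lia.
by rewrite up !IHn //; ring.
Qed.

End ReflectedWalk.

Section PathCounting.
Variable R : realType.

Lemma sum_Lambda (j0 j : R) n (w : nat -> R) :
  \sum_(0 <= k < n.+1) (Lambda j0 j k n)%:R * w k =
  \sum_(p : n.-tuple bool | lb_level j0 p == j) w (count id p).
Proof.
rewrite /Lambda; under eq_bigr do rewrite -sumr_const mulr_suml big_mkcond.
rewrite exchange_big [RHS]big_mkcond /=; apply: eq_bigr => p _.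
under eq_bigr do rewrite inE mul1r.
have [_|] := eqVneq (lb_level j0 p) j; last by move=> _; apply: big1 => k _.
under eq_bigr do rewrite /= eq_sym.
rewrite -big_mkcond big_nat1_eq ifT //=.
by rewrite ltnS -[leqRHS](size_tuple p) count_size.
Qed.

Lemma C_fl_lb_value (S j0 u q : R) n :
  C_fl S j0 u q n = S * lb_value q (1 - q) (fun L => 1 - u `^ (- L)) n j0.
Proof.
rewrite /C_fl lb_value_paths; congr (S * _).
under eq_bigr do under eq_bigr do rewrite -mulrA.
under eq_bigr do rewrite sum_Lambda mulr_sumr big_mkcond.
rewrite exchange_big /=; apply: eq_bigr => p _.
have level_J : lb_level j0 p \in Jlevels j0 n.
  by rewrite /Jlevels mem_undup; apply/mapP; exists p; rewrite ?mem_enum.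
rewrite (bigD1_seq (lb_level j0 p)) ?undup_uniq //= eqxx big1_seq ?addr0 ?mulrA //.
by move=> j /andP[ne_j _]; rewrite eq_sym (negbTE ne_j).
Qed.

End PathCounting.

Lemma mem_zrange (a b k : int) : (k \in zrange a b) = (a <= k <= b).
Proof.
apply/mapP/idP => [[i]|/andP[a_le_k k_le_b]].
  case: ifP => [a_le_b|_]; last by rewrite in_nil.
  by rewrite mem_iota add0n ltnS => i_le ->; lia.
exists `|k - a|%N; last by lia.
by rewrite ifT ?mem_iota ?add0n ?ltnS; lia.
Qed.

Lemma zrange_uniq (a b : int) : uniq (zrange a b).
Proof. by rewrite map_inj_uniq ?iota_uniq // => i j /addrI []. Qed.

Lemma big_zrange (R : realType) (a b : int) (N : nat) (g : int -> R) :
  (forall k, a <= k <= b -> (k < 0) || (N%:Z < k) -> g k = 0) ->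
  \sum_(k <- zrange a b) g k = \sum_(i < N.+1) (if a <= i%:Z <= b then g i else 0).
Proof.
move=> g_out; rewrite (eq_big_seq (fun k => if 0 <= k <= N%:Z then g k else 0)).
  rewrite -big_mkcond -big_filter.
  rewrite -(big_mkord xpredT (fun i : nat => if a <= i%:Z <= b then g i else 0)).
  rewrite /index_iota subn0 -(big_map Posz xpredT (fun k => if a <= k <= b then g k else 0)).
  rewrite [RHS]big_mkcond -[RHS]big_mkcond -[RHS]big_filter; apply/perm_big/uniq_perm.
  - by rewrite filter_uniq ?zrange_uniq.
  - by rewrite filter_uniq // map_inj_uniq ?iota_uniq // => i j [].
  move=> k; rewrite !mem_filter mem_zrange; apply/idP/idP => /andP[k_in k_ab].
    by rewrite k_ab; apply/mapP; exists `|k|%N; rewrite ?mem_iota; lia.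
  by case/mapP: k_ab => i; rewrite mem_iota => i_lt k_eq; rewrite k_eq in k_in *; lia.
by move=> k; rewrite mem_zrange => ab; case: ifP => // out; apply: g_out => //; lia.
Qed.

Lemma floor_half (R : realType) (z : int) (f : R) : 0 <= f < 1 ->
  Num.floor ((z%:~R + f) / 2) = (z %/ 2)%Z.
Proof.
move=> f01; apply: floor_def.
have r_ge0 : 0 <= (z %% 2)%Z%:~R :> R by rewrite ler0z modz_ge0.
have r_le1 : (z %% 2)%Z%:~R <= 1 :> R.
  have : (z %% 2 < 2)%Z by apply: ltz_pmod.
  by rewrite lerz1; lia.
have -> : z%:~R = (z %/ 2)%Z%:~R * 2 + (z %% 2)%Z%:~R :> R.
  by rewrite {1}(divz_eq z 2) intrD intrM.
by apply/andP; split; lra.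
Qed.

Section ClosedForm.
Variables (R : realType) (u q : R).
Let F (L : R) := 1 - u `^ (- L).

Lemma V1_sub_V2 j0 n (m : nat) : Num.floor j0 = m ->
  V1 j0 u q n - V2 j0 u q n = direct q (1 - q) F n m (j0 - m%:R).
Proof.
move=> floor_j0; have := floor_itv j0; rewrite floor_j0 intrD => j0_itv.
have floor_mid : Num.floor ((n%:R + j0) / 2) = ((n%:Z + m) %/ 2)%Z.
  rewrite -(floor_half (n%:Z + m) (f := j0 - m%:R)); last by lra.
  by congr Num.floor; rewrite intrD; congr (_ / 2); ring.
rewrite /V1 /V2 floor_mid floor_j0 (big_zrange (N := n)) => [|k _ out]; last first.
  suff -> : binZ R n k = 0 by rewrite !(mulr0, mul0r).
  by case/orP: out => ?; [exact: binZ_lt0 | exact: binZ_gtn].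
rewrite (big_zrange (N := n)) => [|k k_range out]; last first.
  by rewrite binZ_gtn ?(mulr0, mul0r) //; lia.
rewrite /direct /hpoly -sumrB; apply: eq_bigr => i _.
have i_le_n : (i <= n)%N by rewrite -ltnS.
rewrite -!exprnP subzn // -exprnP /direct_coef.
have -> : (n%:Z - ((n%:Z + m) %/ 2)%Z <= i%:Z) = (n%:Z <= 2 * i%:Z + m) by lia.
rewrite (_ : i%:Z <= n%:Z) ?andbT; last by lia.
case: ifP => /= above; last by rewrite subr0 !mul0r.
have -> : F (m%:~R + (j0 - m%:R) + 2 * i%:~R - n%:R) = 1 - u `^ (n%:R - j0 - 2 * i%:~R).
  by rewrite /F; congr (1 - u `^ _); ring.
case: ifP => [_|beyond]; first by ring.
by rewrite [binZ R n (_ + _ + 1)]binZ_gtn; [ring | lia].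
Qed.

Lemma V3_reflected j0 n (m : nat) : Num.floor j0 = m ->
  V3 j0 u q n = reflected q (1 - q) F n.+1 n m.
Proof.
move=> floor_j0; rewrite /V3 floor_j0 (big_zrange (N := n)) => [|k ? ?]; last by lia.
apply: eq_bigr => j _; rewrite /F.
have floor_int (z : int) : Num.floor (z%:~R / 2 : R) = (z %/ 2)%Z.
  by rewrite -(floor_half z (f := 0 : R)) ?addr0 // lexx ltr01.
have reflected_coefE (k : nat) : reflected_coef R n m j k =
    if (j <= k)%N && (2 * k%:Z + m + 1 <= n%:Z + j%:Z) then ballot R n k j else 0.
  rewrite /reflected_coef; have [k_lt_j|j_le_k] := ltnP k j; last by [].
  by rewrite ballot_lt; [case: ifP | lia].
case: ifP => j_range.
  congr (_ * _); rewrite floor_int (big_zrange (N := n)) => [|k ? ?]; last by lia.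
  apply: eq_bigr => k _; have k_le_n : (k <= n)%N by rewrite -ltnS.
  rewrite reflected_coefE /ballot (subzn k_le_n).
  by do 2 case: ifP => ?; rewrite ?mul0r //; lia.
rewrite /hpoly big1 ?mulr0 // => k _; rewrite reflected_coefE ifF ?mul0r //; lia.
Qed.

Lemma C_fl_closed_form S j0 n : 0 <= j0 ->
  C_fl S j0 u q n = S * (V1 j0 u q n - V2 j0 u q n + V3 j0 u q n).
Proof.
move=> j0_ge0; set m := `|Num.floor j0|%N.
have floor_j0 : Num.floor j0 = m by rewrite gez0_abs // floor_ge0.
have := floor_itv j0; rewrite floor_j0 intrD => j0_itv.
rewrite C_fl_lb_value (V1_sub_V2 n floor_j0) (V3_reflected n floor_j0); congr (S * _).
rewrite -[in LHS](subrKC m%:R j0) (lb_value_closed _ _ _ _ _ (K := n.+1)) //; lra.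
Qed.

End ClosedForm.

Theorem theorem2p2 (R : realType) (T t tau r sigma S M u d q j0 : R) (n : nat)
  (hT : 0 < T) (ht0 : 0 <= t) (htT : t < T) (htau : tau = T - t)
  (hr : 0 <= r) (hsigma : 0 < sigma) (hn : (0 < n)%N)
  (hS : 0 < S) (hM : 0 < M) (hSM : M <= S)
  (hu : u = expR (sigma * Num.sqrt (tau / n%:R)))
  (hd : d = u^-1)
  (hq : q = (u - expR (- (r * tau / n%:R))) / (u - d))
  (hj0 : j0 = ln (S / M) / (sigma * Num.sqrt (tau / n%:R))) :
  C_fl S j0 u q n = S * (V1 j0 u q n - V2 j0 u q n + V3 j0 u q n).
Proof.
apply: C_fl_closed_form; rewrite hj0 divr_ge0 //.
  by rewrite ln_ge0 // ler_pdivlMr // mul1r.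
by rewrite mulr_ge0 ?sqrtr_ge0 ?ltW.
Qed.
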